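(* There is a function $f$ (on an interval of $\mathbb{R}^{\mathbb{Z}_<}$) such that, in $\mathbb{R}^{\mathbb{Z}_<}$, $f$ satisfies $\mathrm{ED}$ but does not have the extreme value property $\mathrm{EVP}$.
   Context: $\mathbb{R}^{\mathbb{Z}_<}$ is the set of formal series $\sum_{i\ge -k}a_i\epsilon^i$ ($k\in\mathbb{N}\cup\{0\}$, $a_i\in\mathbb{R}$), with coefficientwise addition, Cauchy-product multiplication and lexicographic order; $|\cdot|$ is the associated absolute value. $f$ satisfies $\mathrm{ED}$ iff at every point $\mathbf{c}$ of its domain, for every positive $\iota_1\in\mathbb{R}^{\mathbb{Z}_<}$ there is a positive $\iota_2\in\mathbb{R}^{\mathbb{Z}_<}$ with $|f(\mathbf{x})-f(\mathbf{c})|<\iota_1$ whenever $|\mathbf{x}-\mathbf{c}|<\iota_2$. For $f:I\to J$ with $I$ an interval, $f$ has $\mathrm{EVP}$ iff for all $a\le b$ in $I$ there is $x\in[a,b]$ with $f(y)\le f(x)$ for all $y\in[a,b]$. *)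

From Stdlib Require Import Reals ZArith Lia Lra ClassicalDescription.
Open Scope R_scope.

(** The field R^{Z_<} of formal series sum_{i >= -k} a_i eps^i:
    a coefficient function Z -> R whose support is bounded below. *)
Record LC := mkLC {
  coef : Z -> R ;
  coef_lb : exists k : Z, forall i : Z, (i < - k)%Z -> coef i = 0
}.

Definition LCeq (x y : LC) : Prop := forall i, coef x i = coef y i.

Lemma LCzero_lb : exists k : Z, forall i : Z, (i < - k)%Z -> (fun _ : Z => 0) i = 0.
Proof. exists 0%Z; reflexivity. Qed.
Definition LCzero : LC := mkLC (fun _ => 0) LCzero_lb.

Lemma LCadd_lb (x y : LC) :
  exists k : Z, forall i : Z, (i < - k)%Z -> (fun i => coef x i + coef y i) i = 0.
Proof.
  destruct (coef_lb x) as [kx Hx]; destruct (coef_lb y) as [ky Hy].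
  exists (Z.max kx ky); intros i Hi; simpl.
  rewrite Hx, Hy by lia; lra.
Qed.
Definition LCadd (x y : LC) : LC := mkLC _ (LCadd_lb x y).

Lemma LCopp_lb (x : LC) :
  exists k : Z, forall i : Z, (i < - k)%Z -> (fun i => - coef x i) i = 0.
Proof.
  destruct (coef_lb x) as [kx Hx]; exists kx; intros i Hi; simpl.
  rewrite Hx by lia; lra.
Qed.
Definition LCopp (x : LC) : LC := mkLC _ (LCopp_lb x).

Definition LCsub (x y : LC) : LC := LCadd x (LCopp y).

(** Cauchy product (not needed by the statement, included for completeness):
    (xy)_n = sum_{i = -kx}^{n + ky} x_i y_{n-i}, a finite sum. *)
Definition LCmul_coef (kx ky : Z) (x y : Z -> R) (n : Z) : R :=
  sum_f_R0 (fun j => x (Z.of_nat j - kx)%Z * y (n - (Z.of_nat j - kx))%Z)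
           (Z.to_nat (n + kx + ky)).

Definition LClt (x y : LC) : Prop :=
  exists n : Z, (forall j : Z, (j < n)%Z -> coef x j = coef y j) /\ coef x n < coef y n.

Definition LCle (x y : LC) : Prop := LClt x y \/ LCeq x y.

Definition LCabs (x : LC) : LC :=
  if excluded_middle_informative (LCle LCzero x) then x else LCopp x.

Definition is_interval (I : LC -> Prop) : Prop :=
  forall a b z, I a -> I b -> LCle a z -> LCle z b -> I z.

Definition ED (I : LC -> Prop) (f : LC -> LC) : Prop :=
  forall c, I c ->
  forall iota1, LClt LCzero iota1 ->
  exists iota2, LClt LCzero iota2 /\
    forall x, I x -> LClt (LCabs (LCsub x c)) iota2 ->
      LClt (LCabs (LCsub (f x) (f c))) iota1.

Definition EVP (I : LC -> Prop) (f : LC -> LC) : Prop :=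
  forall a b, I a -> I b -> LCle a b ->
  exists x, LCle a x /\ LCle x b /\
    forall y, LCle a y -> LCle y b -> LCle (f y) (f x).

(** The counterexample is [f x = t] for [t < 1] and [f x = 0] otherwise, where [t]
    is the constant coefficient of [x].  Two series closer than [eps] share all
    coefficients of index [<= 0], so [f] is constant on every ball of radius [eps]
    and trivially satisfies ED.  On [[0, 1]], however, [f] takes every real value
    of [[0, 1)] but never [1], so it has no maximum there. *)
From Stdlib Require Import Reals ZArith Lia Lra ClassicalDescription.
Open Scope R_scope.

Definition LCmonomial_coef (r : R) (n : Z) : Z -> R :=
  fun i => if Z.eq_dec i n then r else 0.

Lemma LCmonomial_lb (r : R) (n : Z) :
  exists k : Z, forall i : Z, (i < - k)%Z -> LCmonomial_coef r n i = 0.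
Proof.
  exists (- n)%Z; intros i Hi; unfold LCmonomial_coef.
  destruct (Z.eq_dec i n); [lia | reflexivity].
Qed.

Lemma LCmonomial_coef_at (r : R) (n : Z) : LCmonomial_coef r n n = r.
Proof. unfold LCmonomial_coef; destruct (Z.eq_dec n n); [reflexivity | contradiction]. Qed.

Lemma LCmonomial_coef_off (r : R) (n i : Z) : i <> n -> LCmonomial_coef r n i = 0.
Proof. unfold LCmonomial_coef; destruct (Z.eq_dec i n); [contradiction | reflexivity]. Qed.

Definition LCmonomial (r : R) (n : Z) : LC := mkLC _ (LCmonomial_lb r n).

Definition LCconst (r : R) : LC := LCmonomial r 0.

Lemma LCmonomial_gt0 (r : R) (n : Z) : 0 < r -> LClt LCzero (LCmonomial r n).
Proof.
  intros Hr; exists n; simpl; rewrite LCmonomial_coef_at; split; [| exact Hr].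
  intros j Hj; rewrite LCmonomial_coef_off by lia; reflexivity.
Qed.

Lemma LCle_const (a b : R) : LCle (LCconst a) (LCconst b) <-> a <= b.
Proof.
  split.
  - unfold LCconst; intros [[n [Hbelow Hn]] | Heq]; cbn [coef LCmonomial] in *.
    + destruct (Z.eq_dec n 0) as [-> | Hn0].
      * rewrite !LCmonomial_coef_at in Hn; lra.
      * rewrite !LCmonomial_coef_off in Hn by exact Hn0.
        destruct (Z_lt_le_dec n 0); [lra |].
        specialize (Hbelow 0%Z ltac:(lia)); rewrite !LCmonomial_coef_at in Hbelow; lra.
    + specialize (Heq 0%Z); cbn [coef LCmonomial] in Heq; rewrite !LCmonomial_coef_at in Heq; lra.
  - intros Hab; destruct (Rle_lt_or_eq_dec a b Hab) as [Hlt | ->].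
    + left; exists 0%Z; simpl; rewrite !LCmonomial_coef_at; split; [| exact Hlt].
      intros j Hj; rewrite !LCmonomial_coef_off by lia; reflexivity.
    + right; intros i; reflexivity.
Qed.

(** Equivalent to [LCle LCzero w], but usable without first proving that the
    lexicographic order is total. *)
Definition lex_nonneg (w : LC) : Prop :=
  forall m, (forall j, (j < m)%Z -> coef w j = 0) -> 0 <= coef w m.

Lemma LCle0_lex_nonneg (w : LC) : LCle LCzero w -> lex_nonneg w.
Proof.
  intros [[k [Hbelow Hk]] | Heq] m Hm; simpl in *.
  - destruct (Z.lt_total k m) as [Hkm | [-> | Hmk]].
    + rewrite Hm in Hk by exact Hkm; lra.
    + lra.
    + rewrite <- Hbelow by exact Hmk; lra.
  - rewrite <- Heq; simpl; lra.
Qed.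

Lemma LCabs_lex_nonneg (z : LC) : lex_nonneg (LCabs z).
Proof.
  unfold LCabs; destruct (excluded_middle_informative (LCle LCzero z)) as [Hz | Hz].
  - exact (LCle0_lex_nonneg z Hz).
  - intros m Hm; simpl in *.
    destruct (Rle_or_lt (coef z m) 0) as [Hle | Hgt]; [lra |].
    exfalso; apply Hz; left; exists m; simpl; split; [| exact Hgt].
    intros j Hj; specialize (Hm j Hj); lra.
Qed.

Lemma lex_nonneg_lt_monomial (w : LC) (n : Z) :
  lex_nonneg w -> LClt w (LCmonomial 1 n) -> forall i, (i < n)%Z -> coef w i = 0.
Proof.
  intros Hw [m [Hbelow Hm]] i Hi; simpl in *.
  assert (Hzero : forall j, (j < m)%Z -> (j < n)%Z -> coef w j = 0).
  { intros j Hjm Hjn; rewrite Hbelow by exact Hjm.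
    apply LCmonomial_coef_off; lia. }
  destruct (Z_lt_le_dec m n) as [Hmn | Hnm].
  - exfalso; rewrite LCmonomial_coef_off in Hm by lia.
    specialize (Hw m (fun j Hj => Hzero j Hj ltac:(lia))); lra.
  - apply Hzero; lia.
Qed.

Lemma LCabs_lt_monomial (z : LC) (n : Z) :
  LClt (LCabs z) (LCmonomial 1 n) -> forall i, (i < n)%Z -> coef z i = 0.
Proof.
  intros Hlt i Hi.
  pose proof (lex_nonneg_lt_monomial _ _ (LCabs_lex_nonneg z) Hlt i Hi) as Habs.
  unfold LCabs in Habs.
  destruct (excluded_middle_informative (LCle LCzero z)); simpl in Habs; lra.
Qed.

Lemma LCabs_zero_lt (z iota : LC) :
  (forall i, coef z i = 0) -> LClt LCzero iota -> LClt (LCabs z) iota.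
Proof.
  intros Hz [n [Hbelow Hn]]; exists n.
  assert (Habs : forall i, coef (LCabs z) i = 0).
  { intros i; unfold LCabs.
    destruct (excluded_middle_informative (LCle LCzero z)); simpl; rewrite Hz; lra. }
  rewrite Habs; split; [| exact Hn].
  intros j Hj; rewrite Habs; exact (Hbelow j Hj).
Qed.

Definition depends_below (n : Z) (f : LC -> LC) : Prop :=
  forall x y, (forall i, (i < n)%Z -> coef x i = coef y i) -> LCeq (f x) (f y).

Lemma ED_depends_below (n : Z) (I : LC -> Prop) (f : LC -> LC) :
  depends_below n f -> ED I f.
Proof.
  intros Hf c _ iota1 Hiota1; exists (LCmonomial 1 n); split.
  - apply LCmonomial_gt0; lra.
  - intros x _ Hx; apply LCabs_zero_lt; [| exact Hiota1].
    assert (Hxc : forall i, (i < n)%Z -> coef x i = coef c i).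
    { intros i Hi; pose proof (LCabs_lt_monomial _ _ Hx i Hi) as H; simpl in H; lra. }
    intros i; simpl; rewrite (Hf x c Hxc i); lra.
Qed.

Definition cut_at_one (t : R) : R := if Rlt_dec t 1 then t else 0.

Lemma cut_at_one_lt1 (t : R) : cut_at_one t < 1.
Proof. unfold cut_at_one; destruct (Rlt_dec t 1); lra. Qed.

Lemma cut_at_one_id (t : R) : t < 1 -> cut_at_one t = t.
Proof. unfold cut_at_one; destruct (Rlt_dec t 1); [reflexivity | contradiction]. Qed.

Definition f_cut (x : LC) : LC := LCconst (cut_at_one (coef x 0)).

Lemma f_cut_depends_below : depends_below 1 f_cut.
Proof. intros x y Hxy i; unfold f_cut; rewrite (Hxy 0%Z ltac:(lia)); reflexivity. Qed.

Lemma f_cut_not_EVP (I : LC -> Prop) :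
  I (LCconst 0) -> I (LCconst 1) -> ~ EVP I f_cut.
Proof.
  intros I0 I1 Hevp.
  destruct (Hevp _ _ I0 I1 (proj2 (LCle_const 0 1) ltac:(lra))) as [x [_ [_ Hmax]]].
  set (u := cut_at_one (coef x 0)).
  assert (Hu : u < 1) by apply cut_at_one_lt1.
  set (t := (Rmax u 0 + 1) / 2).
  assert (Ht : 0 < t < 1 /\ u < t)
    by (unfold t, Rmax; destruct (Rle_dec u 0); lra).
  assert (Hle : LCle (f_cut (LCconst t)) (f_cut x)).
  { apply Hmax; apply LCle_const; lra. }
  unfold f_cut in Hle; apply LCle_const in Hle; simpl in Hle.
  rewrite LCmonomial_coef_at in Hle.
  rewrite cut_at_one_id in Hle by lra; fold u in Hle; lra.
Qed.

Theorem mainTheorem6 :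
  exists (I : LC -> Prop) (f : LC -> LC),
    is_interval I /\ ED I f /\ ~ EVP I f.
Proof.
  exists (fun _ => True), f_cut; split; [| split].
  - intros a b z _ _ _ _; exact I.
  - exact (ED_depends_below 1 _ _ f_cut_depends_below).
  - exact (f_cut_not_EVP _ I I).
Qed.
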